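(* For $1\le p\le n$, with $M_{np}=\chi_n(\pi,p)$ for $\pi$ uniform on $\mathfrak S_n$, $$\mathbb E[M_{np}]=\frac{n+2p-2-H_{p-1}}{n},$$ where $H_m=\sum_{i=1}^m 1/i$ and $H_0=0$.
   Context: $[n]=\{1,\dots,n\}$, $\mathfrak S_n$ the symmetric group on $[n]$, right action $i\pi$, products composed left to right; $\tau(i,j)$ the transposition exchanging $i,j$ ($\tau(n,n)$ the identity). For $\pi\in\mathfrak S_n$ let $q(\pi)=n\pi^{-1}$, and for $n\ge2$ let $\downarrow\pi\in\mathfrak S_{n-1}$ be the restriction to $[n-1]$ of $\tau(n,q(\pi))\pi$. The ''number of moves'' function $\chi_n(\pi,p)$, $\pi\in\mathfrak S_n$, $p\in[n]$, is defined recursively: $\chi_1(\mathrm{id},1)=1$; for $n\ge2$, with $q=q(\pi)$: $\chi_n(\pi,p)=\chi_{n-1}(\downarrow\pi,p)$ if $p\ne n,p\ne q$; $=1+\chi_{n-1}(\downarrow\pi,q)$ if $p=n\ne q$; $=1$ if $p=q\ne n$; $=1$ if $p=q=n$. *)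

From mathcomp Require Import all_boot all_order all_algebra all_fingroup.
Set Implicit Arguments. Unset Strict Implicit. Unset Printing Implicit Defensive.
Import GRing.Theory Num.Theory.

(* A permutation of [n] = {1..n} is represented as a function nat -> nat,
   i |-> i pi (right action); only its values on 1..n matter. *)

Definition tau (a b : nat) (i : nat) : nat :=
  if i == a then b else if i == b then a else i.

Definition qf (n : nat) (f : nat -> nat) : nat :=
  (find (fun i => f i == n) (iota 1 n)).+1.

(* down pi = restriction to [n-1] of tau(n,q(pi)) pi  (left-to-right product:
   first tau, then pi) *)
Definition down (n : nat) (f : nat -> nat) : nat -> nat :=
  fun i => f (tau n (qf n f) i).

Fixpoint chi (n : nat) (f : nat -> nat) (p : nat) {struct n} : nat :=
  match n with
  | 0 => 0
  | m.+1 =>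
    if m is 0 then 1 else
    let q := qf n f in
    if p == n then (if q == n then 1 else (chi m (down n f) q).+1)
    else if p == q then 1
    else chi m (down n f) p
  end.

(* view s : 'S_n (a permutation of {0..n-1}) as a permutation of {1..n} *)
Definition perm_fun (n : nat) (s : 'S_n) : nat -> nat :=
  fun i => match @insub _ (fun k => k < n) 'I_n i.-1 with
           | Some j => (s j).+1
           | None => i
           end.

Definition harm (m : nat) : rat := \sum_(1 <= i < m.+1) (i%:R)^-1.

Definition expected_moves (n p : nat) : rat :=
  (\sum_(s : 'S_n) (chi n (perm_fun s) p)%:R) / (n`!)%:R.

(* Write pi = tau(n+1, q) * lift(g) with q in [n+1] and g in S_n.  This is a
   bijection [n+1] x S_n -> S_(n+1) under which q(pi) = q and down pi = g, so
   the recursion defining chi turns into recurrences for the totals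
   S_n(p) = sum_pi chi_n(pi, p):
     S_(n+1)(p) = n! + n S_n(p)                       for p <= n,
     S_(n+1)(n+1) = sum_(p <= n) S_n(p) + (n+1)!,
   and both are solved by S_n(p) = (n-1)! (n + 2p - 2 - H_(p-1)). *)

From mathcomp Require Import all_boot all_order all_algebra all_fingroup ring zify.
Import GRing.Theory Num.Theory.

Set Implicit Arguments.
Unset Strict Implicit.
Unset Printing Implicit Defensive.

Lemma perm_funS n (s : 'S_n) (x : 'I_n) : perm_fun s x.+1 = (s x).+1.
Proof.
rewrite /perm_fun /= insubT //= => x_lt_n.
by congr (_ .+1); congr (s _); apply: val_inj.
Qed.

Lemma find_iota (P : pred nat) a N k : k < N -> P (a + k) ->
  (forall j, j < k -> ~~ P (a + j)) -> find P (iota a N) = k.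
Proof.
elim: N a k => [//|N IH] a [|k] ltkN Pk notP /=.
  by rewrite addn0 in Pk; rewrite Pk.
have := notP 0 isT; rewrite addn0 => /negbTE ->.
congr _.+1; apply: IH => [//||j ltjk]; first by rewrite addSnnS.
by rewrite addSnnS; apply: notP.
Qed.

Lemma chiSS m f p : chi m.+2 f p =
  if p == m.+2 then
    (if qf m.+2 f == m.+2 then 1 else (chi m.+1 (down m.+2 f) (qf m.+2 f)).+1)
  else if p == qf m.+2 f then 1 else chi m.+1 (down m.+2 f) p.
Proof. by []. Qed.

Lemma eq_in_chi n f g p : (forall i, 0 < i <= n -> f i = g i) ->
  chi n f p = chi n g p.
Proof.
elim: n f g p => [//|n IH] f g p efg.
have eq_qf : qf n.+1 f = qf n.+1 g.
  rewrite /qf; congr _.+1; apply: eq_in_find => i.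
  by rewrite mem_iota => /andP[i_gt0 i_lt]; rewrite efg ?i_gt0.
have eq_down i : 0 < i <= n -> down n.+1 f i = down n.+1 g i.
  move=> /andP[i_gt0 i_le]; rewrite /down eq_qf; apply: efg.
  rewrite /tau; case: eqP => [ei|_]; first by rewrite ei ltnn in i_le.
  by case: eqP => _; rewrite ?ltnSn // i_gt0 (leq_trans i_le).
by case: n IH efg eq_qf eq_down => [//|n] IH _ eq_qf eq_down;
  rewrite !chiSS eq_qf !(IH _ _ _ eq_down).
Qed.

Definition extend n (q : 'I_n.+1) (g : 'S_n) : 'S_n.+1 :=
  (tperm ord_max q * lift_perm ord_max ord_max g)%g.

Lemma extend_q n q (g : 'S_n) : extend q g q = ord_max.
Proof. by rewrite /extend permM tpermR lift_perm_id. Qed.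

Lemma extend_eq_max n q (g : 'S_n) x : (extend q g x == ord_max) = (x == q).
Proof. by rewrite -{1}(extend_q q g) (inj_eq perm_inj). Qed.

Lemma extend_bij n : bijective (fun x : 'I_n.+1 * 'S_n => extend x.1 x.2).
Proof.
apply: inj_card_bij; last by rewrite card_prod card_ord !card_Sn factS.
move=> [q g] [q' g'] /= eq_ext.
have eq_q : q = q' by apply/eqP; rewrite -(extend_eq_max q' g') -eq_ext extend_q.
subst q'; move: eq_ext; rewrite /extend => /mulgI eq_lift; congr (_, _); apply/permP => k.
apply: (@lift_inj _ ord_max).
by have := congr1 (fun s : 'S_n.+1 => s (lift ord_max k)) eq_lift;
  rewrite /= !lift_perm_lift.
Qed.

Lemma big_extend n (F : 'S_n.+1 -> nat) :
  \sum_(s : 'S_n.+1) F s = \sum_(q < n.+1) \sum_(g : 'S_n) F (extend q g).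
Proof.
rewrite pair_bigA /= (reindex (fun x : 'I_n.+1 * 'S_n => extend x.1 x.2)) //=.
exact: onW_bij (extend_bij n).
Qed.

Lemma qf_extend n q (g : 'S_n) : qf n.+1 (perm_fun (extend q g)) = q.+1.
Proof.
rewrite /qf; congr _.+1; apply: find_iota => //.
  by rewrite add1n (perm_funS _ q) extend_q.
move=> j ltjq; have ltjn : j < n.+1 by apply: ltn_trans ltjq _.
rewrite add1n (perm_funS _ (Ordinal ltjn)) eqSS.
have := extend_eq_max q g (Ordinal ltjn); rewrite -val_eqE /= => ->.
by rewrite -val_eqE /= neq_ltn ltjq.
Qed.

Lemma down_extend n q (g : 'S_n) i : 0 < i <= n ->
  down n.+1 (perm_fun (extend q g)) i = perm_fun g i.
Proof.
case: i => [//|j] /andP[_ ltjn].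
rewrite (perm_funS _ (Ordinal ltjn)) /down.
have -> : tau n.+1 (qf n.+1 (perm_fun (extend q g))) j.+1 =
          (tperm ord_max q (lift ord_max (Ordinal ltjn))).+1.
  rewrite qf_extend /tau permE /= -!val_eqE /= /bump leqNgt ltjn add0n !eqSS.
  case: (j =P n) => [ejn|_]; first by rewrite ejn ltnn in ltjn.
  by case: (j =P q) => //= _; rewrite /bump leqNgt ltjn.
by rewrite perm_funS /extend permM tpermK lift_perm_lift lift_max.
Qed.

Lemma chi_extend n q (g : 'S_n) p : 0 < n ->
  chi n.+1 (perm_fun (extend q g)) p =
  if p == n.+1 then (if q.+1 == n.+1 then 1 else (chi n (perm_fun g) q.+1).+1)
  else if p == q.+1 then 1 else chi n (perm_fun g) p.
Proof.
case: n q g => [//|m] q g _.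
by rewrite chiSS qf_extend !(eq_in_chi _ (down_extend q g)).
Qed.

Definition chi_sum n p := \sum_(s : 'S_n) chi n (perm_fun s) p.

Lemma chi_sum1 : chi_sum 1 1 = 1.
Proof. by rewrite /chi_sum sum_nat_const card_Sn. Qed.

Lemma chi_sumS n p : 0 < n -> 0 < p <= n ->
  chi_sum n.+1 p = n`! + n * chi_sum n p.
Proof.
move=> n_gt0 /andP[p_gt0 p_le_n]; rewrite /chi_sum big_extend.
under eq_bigr => q _ do under eq_bigr => g _ do rewrite chi_extend //.
have ltp1n : p.-1 < n.+1 by rewrite ltnS (leq_trans (leq_pred p)).
rewrite (bigD1 (Ordinal ltp1n)) //= ltn_eqF ?ltnS // prednK // eqxx.
rewrite sum_nat_const card_Sn muln1; congr (_ + _).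
rewrite (eq_bigr (fun _ => \sum_(g : 'S_n) chi n (perm_fun g) p)).
  by rewrite sum_nat_const cardC1 card_ord.
move=> q q_neq; apply: eq_bigr => g _; rewrite ifN //.
by apply: contra q_neq => /eqP ep; apply/eqP/val_inj; rewrite /= ep.
Qed.

Lemma chi_sumSS n : 0 < n ->
  chi_sum n.+1 n.+1 = \sum_(i < n) chi_sum n i.+1 + n * n`! + n`!.
Proof.
move=> n_gt0; rewrite /chi_sum big_extend.
under eq_bigr => q _ do under eq_bigr => g _ do rewrite chi_extend // eqxx.
rewrite big_ord_recr /= eqxx sum_nat_const card_Sn muln1; congr (_ + _).
rewrite (eq_bigr (fun i : 'I_n => chi_sum n i.+1 + n`!)).
  by rewrite big_split /= sum_nat_const card_ord.
move=> i _; rewrite /= eqSS ltn_eqF //.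
under eq_bigr => g _ do rewrite -addn1.
by rewrite big_split /= sum_nat_const card_Sn muln1.
Qed.

Local Open Scope ring_scope.

Lemma harm0 : harm 0 = 0.
Proof. by rewrite /harm big_geq. Qed.

Lemma harmS m : harm m.+1 = harm m + (m.+1%:R)^-1.
Proof. by rewrite /harm big_nat_recr. Qed.

Lemma sum_harm N : \sum_(i < N) harm i = N%:R * harm N - N%:R.
Proof.
elim: N => [|N IH]; first by rewrite big_ord0 harm0 mul0r subr0.
rewrite big_ord_recr /= IH harmS mulrDr mulfV ?pnatr_eq0 // -addn1 !natrD.
ring.
Qed.

Definition moves_num (n p : nat) : rat := n%:R + 2 * p%:R - 2 - harm p.-1.

Lemma sum_moves_num m N :
  \sum_(i < N) moves_num m i.+1 = N%:R * m%:R + N%:R * N%:R - N%:R * harm N.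
Proof.
have sum_double k : \sum_(i < k) (2 * i%:R : rat) = k%:R * k%:R - k%:R.
  elim: k => [|k IH]; first by rewrite big_ord0 mul0r subr0.
  by rewrite big_ord_recr /= IH -addn1 !natrD; ring.
rewrite (eq_bigr (fun i : 'I_N => (m%:R + 2 * i%:R) - harm i)); last first.
  by move=> i _; rewrite /moves_num -natr1; ring.
by rewrite sumrB big_split /= sum_double sum_harm sumr_const card_ord
  -mulr_natl; ring.
Qed.

Lemma chi_sum_closed n p : (0 < p <= n.+1)%N ->
  (chi_sum n.+1 p)%:R = (n`!)%:R * moves_num n.+1 p.
Proof.
elim: n p => [|n IH] p /andP[p_gt0 p_le].
  have -> : p = 1%N by apply/eqP; rewrite eqn_leq p_le p_gt0.
  by rewrite chi_sum1 /moves_num harm0 fact0; ring.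
have [ltp|/(conj p_le)/andP/anti_leq ->] := ltnP p n.+2.
  have p_le_n1 : (0 < p <= n.+1)%N by rewrite p_gt0 -ltnS.
  rewrite chi_sumS // natrD natrM IH //.
  by rewrite /moves_num factS natrM -!natr1; ring.
rewrite chi_sumSS // !natrD natr_sum.
under eq_bigr => i _ do rewrite IH ?ltn_ord //.
rewrite -mulr_sumr sum_moves_num /moves_num /= !factS !natrM -!natr1; ring.
Qed.

Theorem mainTheorem7 (n p : nat) (hp : (1 <= p <= n)%N) :
  expected_moves n p = ((n + 2 * p - 2)%N%:R - harm (p - 1)) / n%:R.
Proof.
case: n hp => [|m] hp; first by case/andP: hp => /leq_trans H /H.
rewrite /expected_moves -natr_sum -/(chi_sum m.+1 p) chi_sum_closed //.
have two_le : (2 <= m.+1 + 2 * p)%N by case/andP: hp; lia.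
rewrite /moves_num natrB // natrD natrM subn1 factS natrM.
have fact_neq0 : (m`!)%:R != 0 :> rat by rewrite pnatr_eq0 -lt0n fact_gt0.
by field; rewrite fact_neq0 nat1r pnatr_eq0.
Qed.
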